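(* Let $A$ be a synaptic algebra and let $p,q\in P$ be in generic position ($p\wedge q=p\wedge q^{\perp}=p^{\perp}\wedge q=p^{\perp}\wedge q^{\perp}=0$). Let $c:=(pqp+p^{\perp}q^{\perp}p^{\perp})^{1/2}$, $s:=(pq^{\perp}p+p^{\perp}qp^{\perp})^{1/2}$, let $u$, $v$ and $k$ be the symmetries of the polar decompositions of $p-q^{\perp}$, $p-q$ and $pqp^{\perp}+p^{\perp}qp$ respectively, and put $j:=uvp+pvu$. Then: (i) $c^{\circ}=s^{\circ}=(cs)^{\circ}=(csj)^{\circ}=1$; (ii) $uv+vu=0$; (iii) $j=k$.
   Context: Synaptic algebra (Foulis): $R$ is a real linear associative algebra with unit $1$, and $A\subseteq R$ is a real linear subspace with $1\in A$. For $a,b\in A$ write $aCb$ iff $ab=ba$; $C(a):=\{b\in A: aCb\}$; $CC(a):=\{b\in A: bCd \text{ for all } d\in C(a)\}$. $A$ is a synaptic algebra with enveloping algebra $R$ iff: (SA1) $A$ is a partially ordered archimedean real linear space with positive cone $A^+$, $1$ is an order unit, $\|\cdot\|$ the order-unit norm; (SA2) $a\in A\Rightarrow a^2\in A^+$; (SA3) $a,b\in A^+\Rightarrow aba\in A^+$; (SA4) if $a\in A$, $b\in A^+$, $aba=0$ then $ab=ba=0$; (SA5) if $a\in A^+$ there is $b\in A^+\cap CC(a)$ with $b^2=a$; (SA6) for $a\in A$ there is $p=p^2\in A$ with $ab=0\Leftrightarrow pb=0$ for all $b\in A$; (SA7) if $1\le a$ there is $b\in A$ with $ab=ba=1$; (SA8)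 if $a,b\in A$, $a_1\le a_2\le\cdots$ are pairwise commuting elements of $C(b)$ with $\|a-a_n\|\to0$, then $a\in C(b)$. $A$ is nondegenerate. Products are computed in $R$ ($c$, $s$, $j$ pairwise commute, so $cs,csj\in A$). $P:=\{p\in A:p=p^2\}$ with inherited order is an orthomodular lattice with $p^{\perp}:=1-p$, meet $\wedge$, join $\vee$. For $0\le a$, $a^{1/2}$ is its unique positive square root in $A$, $|a|:=(a^2)^{1/2}$; $a^{\circ}$ is the carrier of $a$ (the unique projection with $ab=0\Leftrightarrow a^{\circ}b=0$ for all $b\in A$). A symmetry is $u\in A$ with $u^2=1$. For $a\in A$, the signum $t$ of $a$ is the partial symmetry with $t^2=a^{\circ}$, $t\in CC(a)$, $a=|a|t=t|a|$; the symmetry of the polar decomposition of $a$ is $t+(a^{\circ})^{\perp}$. *)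

From HB Require Import structures.
From mathcomp Require Import all_boot all_order all_algebra.
From mathcomp Require Import boolp classical_sets reals.
Set Implicit Arguments. Unset Strict Implicit. Unset Printing Implicit Defensive.
Import Order.TTheory GRing.Theory Num.Theory.
Local Open Scope ring_scope.

Section Synaptic.
Variables (K : realType) (R : algType K).
(* A : the subspace of R, pos : the positive cone A^+ *)
Variables (A pos : R -> Prop).

Definition sle (a b : R) : Prop := pos (b - a).

Definition commA (a : R) : R -> Prop := fun b => A b /\ a * b = b * a.
Definition bicommA (a : R) : R -> Prop :=
  fun b => A b /\ forall d, commA a d -> b * d = d * b.

Definition onorm (a : R) : K :=
  inf [set l : K | 0 < l /\ sle (- l%:A) a /\ sle a l%:A].

Definition projA (p : R) : Prop := A p /\ p * p = p.

Record synaptic : Prop := Synaptic {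
  sa_sub0 : A 0;
  sa_subD : forall a b, A a -> A b -> A (a + b);
  sa_subZ : forall (l : K) a, A a -> A (l *: a);
  sa_one : A 1;
  sa_nondeg : (1 : R) <> 0;
  sa_posA : forall a, pos a -> A a;
  sa_pos0 : pos 0;
  sa_posD : forall a b, pos a -> pos b -> pos (a + b);
  sa_posZ : forall (l : K) a, 0 <= l -> pos a -> pos (l *: a);
  sa_posN : forall a, pos a -> pos (- a) -> a = 0;
  sa_archi : forall a b, A a -> A b -> (forall n : nat, sle (a *+ n) b) -> sle a 0;
  sa_unit : forall a, A a -> exists l : K, sle a l%:A;
  sa_sq : forall a, A a -> pos (a * a);
  sa_aba : forall a b, pos a -> pos b -> pos (a * b * a);
  sa_aba0 : forall a b, A a -> pos b -> a * b * a = 0 -> a * b = 0 /\ b * a = 0;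
  sa_sqrt : forall a, pos a -> exists b, pos b /\ bicommA a b /\ b * b = a;
  sa_carrier : forall a, A a -> exists p, A p /\ p * p = p /\
                 forall b, A b -> (a * b = 0 <-> p * b = 0);
  sa_inv : forall a, A a -> sle 1 a -> exists b, A b /\ a * b = 1 /\ b * a = 1;
  sa_mono : forall a b (f : nat -> R), A a -> A b ->
     (forall n, commA b (f n)) ->
     (forall m n, f m * f n = f n * f m) ->
     (forall n, sle (f n) (f n.+1)) ->
     (forall eps : K, 0 < eps -> exists N, forall n, (N <= n)%N -> onorm (a - f n) < eps) ->
     commA b a
}.

Definition is_meet (p q m : R) : Prop :=
  projA m /\ sle m p /\ sle m q /\
  forall r, projA r -> sle r p -> sle r q -> sle r m.

Definition perp (p : R) : R := 1 - p.

Definition generic (p q : R) : Prop :=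
  is_meet p q 0 /\ is_meet p (perp q) 0 /\ is_meet (perp p) q 0 /\
  is_meet (perp p) (perp q) 0.

Definition is_sqrt (a b : R) : Prop := pos b /\ b * b = a.

Definition is_carrier (a e : R) : Prop :=
  projA e /\ forall b, A b -> (a * b = 0 <-> e * b = 0).

Definition is_signum (a t : R) : Prop :=
  A t /\ (exists e, is_carrier a e /\ t * t = e) /\ bicommA a t /\
  exists ab, is_sqrt (a * a) ab /\ a = ab * t /\ a = t * ab.

Definition is_polar_sym (a u : R) : Prop :=
  exists t e, is_signum a t /\ is_carrier a e /\ u = t + perp e.

End Synaptic.

(* Write c and s for the "cosine" and "sine" square roots, a := p - q^perp and
   b := p - q.  Generic position makes c^2 = pqp + p^perp q^perp p^perp a left
   non-zero-divisor on A: if c^2 x = 0 then pqp x = 0, and p /\ q^perp = 0 forces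
   p x = 0; likewise p^perp x = 0.  The same holds for s^2 = 1 - c^2, hence for c,
   s and cs, i.e. their carriers are 1.  As a^2 = c^2 and b^2 = s^2, the polar
   decompositions read a = cu = uc and b = sv = vs with u, v symmetries; since c, s
   commute with a, b and ab + ba = 0, cancelling c and then s gives uv + vu = 0.
   Cancelling again gives upu = q and vpv = q^perp, so the rotation uv anticommutes
   with the reflection 2p - 1 and j = uv(2p - 1) is a symmetry commuting with c and
   s.  Finally csj = abp + pba = pqp^perp + p^perp qp, whose polar decomposition is
   therefore (cs) j, so k = j. *)

From HB Require Import structures.
From mathcomp Require Import all_boot all_order all_algebra.
From mathcomp Require Import boolp classical_sets reals.
Import Order.TTheory GRing.Theory Num.Theory.
Local Open Scope ring_scope.
Set Implicit Arguments. Unset Strict Implicit.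

(* [ring] needs commutativity.  Identities in the algebra R are proved by expanding
   products ([expand_mul]) and deciding the resulting equality in the additive
   group by reflection ([zmod]), comparing the coefficients of the atoms. *)
Inductive zexpr := ZAtom of nat | ZAdd of zexpr & zexpr | ZOpp of zexpr | ZZero.

Fixpoint zcoef (e : zexpr) (i : nat) : int :=
  match e with
  | ZAtom n => (n == i)%:Z
  | ZAdd a b => zcoef a i + zcoef b i
  | ZOpp a => - zcoef a i
  | ZZero => 0
  end.

Section ZmodReflection.
Variable V : zmodType.

Fixpoint zeval (env : seq V) (e : zexpr) : V :=
  match e with
  | ZAtom n => env`_n
  | ZAdd a b => zeval env a + zeval env b
  | ZOpp a => - zeval env a
  | ZZero => 0
  end.

Lemma zeval_coef env e : zeval env e = \sum_(i < size env) env`_i *~ zcoef e i.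
Proof.
elim: e => [n|a IHa b IHb|a IHa|] /=.
- have [lt_n|le_n] := ltnP n (size env).
    rewrite (bigD1 (Ordinal lt_n)) //= eqxx big1 ?addr0 // => i ne_i.
    by have -> : (n == i) = false by apply/negbTE; rewrite eq_sym.
  rewrite nth_default // big1 // => i _.
  by rewrite gtn_eqF // (leq_trans (ltn_ord i)).
- by rewrite IHa IHb -big_split; apply: eq_bigr => i _; rewrite mulrzDr.
- by rewrite IHa -sumrN; apply: eq_bigr => i _; rewrite mulrNz.
- by rewrite big1.
Qed.

Lemma zeval_eq env e1 e2 :
  all (fun i => zcoef e1 i == zcoef e2 i) (iota 0 (size env)) ->
  zeval env e1 = zeval env e2.
Proof.
move/allP=> coefE; rewrite !zeval_coef; apply: eq_bigr => i _.
by rewrite (eqP (coefE i _)) // mem_iota add0n ltn_ord.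
Qed.

End ZmodReflection.

Ltac zindex x env :=
  lazymatch env with
  | cons ?y ?env' =>
    match constr:(tt) with
    | _ => let _ := match goal with _ => unify x y end in constr:(0%N)
    | _ => let n := zindex x env' in constr:(S n)
    end
  end.

Ltac zatoms t env :=
  lazymatch t with
  | (?a + ?b)%R => let env' := zatoms a env in zatoms b env'
  | (- ?a)%R => zatoms a env
  | 0%R => env
  | _ => match constr:(tt) with
         | _ => let _ := zindex t env in env
         | _ => constr:(cons t env)
         end
  end.

Ltac zreify t env :=
  lazymatch t with
  | (?a + ?b)%R =>
    let ra := zreify a env in let rb := zreify b env in constr:(ZAdd ra rb)
  | (- ?a)%R => let ra := zreify a env in constr:(ZOpp ra)
  | 0%R => constr:(ZZero)
  | _ => let n := zindex t env in constr:(ZAtom n)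
  end.

Ltac zmod :=
  lazymatch goal with
  | |- @eq ?T ?l ?r =>
    let envl := zatoms l (@nil T) in
    let env := zatoms r envl in
    let el := zreify l env in
    let er := zreify r env in
    change (zeval env el = zeval env er);
    apply: zeval_eq; vm_compute; reflexivity
  end.

Ltac expand_mul :=
  rewrite ?(mulrDl, mulrDr, mulrBl, mulrBr, mulrN, mulNr, mul1r, mulr1, mulrA).

Ltac nc_ring := expand_mul; zmod.

Lemma mulr_idem (R : pzRingType) (e : R) : e * e = e -> forall x, x * e * e = x * e.
Proof. by move=> ee x; rewrite -mulrA ee. Qed.

Ltac idem_simpl :=
  repeat match goal with
  | ee : ?e * ?e = ?e |- context [?x * ?e * ?e] => rewrite (mulr_idem ee x)
  | ee : ?e * ?e = ?e |- context [?e * ?e] => rewrite ee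
  end.

Ltac proj_ring := rewrite /perp; expand_mul; idem_simpl; zmod.

Section RingFacts.
Variable R : pzRingType.
Implicit Types a b r u w x y : R.

Lemma anticomm_factor r y a b :
  a = r * y -> GRing.comm r b -> a * b + b * a = 0 -> r * (y * b + b * y) = 0.
Proof. by move=> -> rb; rewrite mulrDr !mulrA rb -[b * r * y]mulrA. Qed.

Lemma conj_polar r u a x :
  a = r * u -> a = u * r -> GRing.comm r x -> r * r * (u * x * u) = a * x * a.
Proof.
move=> a_ru a_ur rx; have ur : u * r = r * u by rewrite -a_ur.
transitivity (r * (u * r) * x * u); first by rewrite ur !mulrA.
by rewrite a_ru !mulrA -(mulrA (r * u) r x) rx !mulrA.
Qed.

Lemma sqr_anticomm w x :
  w * w = -1 -> x * x = 1 -> w * x = - (x * w) -> (w * x) * (w * x) = 1.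
Proof.
move=> ww xx wx.
have xw : x * w = - (w * x) by rewrite wx opprK.
by rewrite -mulrA (mulrA x w x) xw mulNr mulrN !mulrA ww mulN1r mulNr opprK xx.
Qed.

End RingFacts.

Section SynapticAlgebra.
Variables (K : realType) (R : algType K) (A pos : R -> Prop).
Hypothesis HA : synaptic A pos.

Lemma perpK (x : R) : perp (perp x) = x.
Proof. by rewrite /perp opprB addrC subrK. Qed.

Lemma proj_decomp (p x : R) : x = p * x + perp p * x.
Proof. by rewrite -mulrDl /perp addrC subrK mul1r. Qed.

Section ProjectionIdentities.
Variables p q : R.
Hypotheses (pp : p * p = p) (qq : q * q = q).

Local Notation cos2 := (p * q * p + perp p * perp q * perp p).
Local Notation sin2 := (p * perp q * p + perp p * q * perp p).

Lemma perp_idem : perp p * perp p = perp p.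
Proof. by proj_ring. Qed.

Lemma sqr_sub_perp : (p - perp q) * (p - perp q) = cos2.
Proof. by proj_ring. Qed.

Lemma sqr_sub : (p - q) * (p - q) = sin2.
Proof. by proj_ring. Qed.

Lemma sqr_reflection : (p - perp p) * (p - perp p) = 1.
Proof. by proj_ring. Qed.

Lemma sin2E : sin2 = 1 - cos2.
Proof. by proj_ring. Qed.

Lemma commr_cos2_p : GRing.comm p cos2.
Proof. by rewrite /GRing.comm; proj_ring. Qed.

Lemma commr_cos2_q : GRing.comm q cos2.
Proof. by rewrite /GRing.comm; proj_ring. Qed.

Lemma anticomm_sub : (p - perp q) * (p - q) + (p - q) * (p - perp q) = 0.
Proof. by proj_ring. Qed.

Lemma conj_sub_perp : (p - perp q) * p * (p - perp q) = (p - perp q) * (p - perp q) * q.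
Proof. by proj_ring. Qed.

Lemma conj_sub : (p - q) * p * (p - q) = (p - q) * (p - q) * perp q.
Proof. by proj_ring. Qed.

Lemma sub_perp_sub_p :
  (p - perp q) * (p - q) * p + p * ((p - q) * (p - perp q)) =
  p * q * perp p + perp p * q * p.
Proof. by proj_ring. Qed.

End ProjectionIdentities.

Lemma A_add x y : A x -> A y -> A (x + y).
Proof. by move=> Ax Ay; apply: (sa_subD HA). Qed.

Lemma A_sub x y : A x -> A y -> A (x - y).
Proof. by move=> Ax Ay; apply: A_add => //; rewrite -scaleN1r; apply: (sa_subZ HA). Qed.

Lemma A_pos x : pos x -> A x.
Proof. exact: (sa_posA HA). Qed.

Lemma A_sqr x : A x -> A (x * x).
Proof. by move=> Ax; apply/A_pos/(sa_sq HA). Qed.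

Lemma A_jordan x y : A x -> A y -> A (x * y + y * x).
Proof.
move=> Ax Ay; have -> : x * y + y * x = (x + y) * (x + y) - x * x - y * y by nc_ring.
by apply: A_sub; [apply: A_sub|]; apply: A_sqr => //; apply: A_add.
Qed.

Lemma A_conj x y : A x -> A y -> A (x * y * x).
Proof.
move=> Ax Ay; have A2 : A (x * y * x + x * y * x).
  have -> : x * y * x + x * y * x =
      x * (x * y + y * x) + (x * y + y * x) * x - (x * x * y + y * (x * x)) by nc_ring.
  by apply: A_sub; apply: A_jordan => //; [apply: A_jordan | apply: A_sqr].
have := sa_subZ HA 2^-1 A2.
by rewrite -mulr2n -scaler_nat scalerA mulVf ?scale1r ?pnatr_eq0.
Qed.

Lemma A_triple x y z : A x -> A y -> A z -> A (x * y * z + z * y * x).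
Proof.
move=> Ax Ay Az.
have -> : x * y * z + z * y * x = (x + z) * y * (x + z) - x * y * x - z * y * z by nc_ring.
by apply: A_sub; [apply: A_sub|]; apply: A_conj => //; apply: A_add.
Qed.

Lemma projA_perp p : projA A p -> projA A (perp p).
Proof. by case=> Ap pp; split; [apply: A_sub (sa_one HA) Ap | apply: perp_idem]. Qed.

Lemma pos_proj e : projA A e -> pos e.
Proof. by case=> Ae ee; rewrite -ee; apply: (sa_sq HA). Qed.

Lemma sqr_eq0 x : A x -> x * x = 0 -> x = 0.
Proof.
move=> Ax xx0; have pos1 : pos 1.
  by apply: pos_proj; split; [exact: (sa_one HA) | rewrite mulr1].
by have := sa_aba0 HA Ax pos1; rewrite mulr1 => /(_ xx0) [].
Qed.

Lemma pos_conj_comm z d : pos z -> A d -> GRing.comm d z -> pos (d * z * d).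
Proof.
move=> pz Ad dz; have [w [pw [[_ bw] ww]]] := sa_sqrt HA pz.
have wd : w * d = d * w by apply: bw.
have -> : d * z * d = w * (d * d) * w.
  by rewrite -ww !mulrA wd -(mulrA (d * w) w d) wd -(mulrA (d * w) d w).
by apply: (sa_aba HA) => //; apply: (sa_sq HA).
Qed.

Lemma sa_sqrt_eq x r : pos x -> pos r -> bicommA A (x * x) r -> r * r = x * x -> x = r.
Proof.
move=> px pr [Ar br] rr; have Ax := A_pos px.
have xr : GRing.comm r x by apply: br; split => //; rewrite mulrA.
pose d := x - r; have Ad : A d by apply: A_sub.
have dx : GRing.comm d x by apply/commr_sym/commrB.
have dr : GRing.comm d r by apply/commr_sym/commrB.
have dxd_drd : d * x * d + d * r * d = 0.
  have d_sum0 : d * (x + r) = 0 by rewrite /d mulrBl !mulrDr rr xr; nc_ring.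
  by rewrite -mulrDl -mulrDr d_sum0 mul0r.
have dxd0 : d * x * d = 0.
  apply: (sa_posN HA); first exact: pos_conj_comm.
  have -> : - (d * x * d) = d * r * d.
    by apply/eqP; rewrite eq_sym -addr_eq0 addrC dxd_drd.
  exact: pos_conj_comm.
have drd0 : d * r * d = 0 by move: dxd_drd; rewrite dxd0 add0r.
have [d_x _] := sa_aba0 HA Ad px dxd0; have [d_r _] := sa_aba0 HA Ad pr drd0.
by apply/subr0_eq/(sqr_eq0 Ad); rewrite {2}/d mulrBr d_x d_r subrr.
Qed.

Lemma sqrt_unique x y : pos x -> pos y -> x * x = y * y -> x = y.
Proof.
move=> px py xy; have [r [pr [br rr]]] := sa_sqrt HA (sa_sq HA (A_pos px)).
rewrite (sa_sqrt_eq px pr br rr); rewrite xy in br rr.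
by rewrite (sa_sqrt_eq py pr br rr).
Qed.

Lemma commr_sqrt x d : pos x -> A d -> GRing.comm (x * x) d -> GRing.comm x d.
Proof.
move=> px Ad xxd; have [r [pr [br rr]]] := sa_sqrt HA (sa_sq HA (A_pos px)).
by rewrite (sa_sqrt_eq px pr br rr); apply: br.2.
Qed.

Lemma pos_mul_comm x y : pos x -> pos y -> GRing.comm x y -> pos (x * y).
Proof.
move=> px py xy; have [w [pw [[_ bw] ww]]] := sa_sqrt HA px.
have wy : w * y = y * w by apply: bw; split => //; exact: A_pos.
by rewrite -ww -mulrA wy mulrA; apply: (sa_aba HA).
Qed.

(* For a in A this says exactly that the carrier of a is 1 (see [carrier_lregA]
   and [lregA_carrier]). *)
Definition lregA (a : R) : Prop := forall y, A y -> a * y = 0 -> y = 0.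

Lemma lregA_eq a y z : lregA a -> A y -> A z -> a * y = a * z -> y = z.
Proof.
by move=> ra Ay Az ayz; apply/subr0_eq/ra; [apply: A_sub | rewrite mulrBr ayz subrr].
Qed.

Lemma lregA_of_mul x y : lregA (x * y) -> lregA y.
Proof. by move=> rxy z Az yz0; apply: rxy; rewrite // -mulrA yz0 mulr0. Qed.

Lemma lregA_mul x y : A x -> pos y -> lregA x -> lregA y -> lregA (x * y).
Proof.
move=> Ax py rx ry z Az xyz0.
pose w := y * (z * z) * y.
have Aw : A w by apply: A_conj; [apply: A_pos | apply: A_sqr].
have xwx0 : x * w * x = 0.
  have -> : x * w * x = x * y * z * (z * y * x) by rewrite /w !mulrA.
  by rewrite xyz0 mul0r.
have [xw0 _] := sa_aba0 HA Ax (sa_aba HA py (sa_sq HA Az)) xwx0.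
have zyz0 : z * y * z = 0.
  apply: sqr_eq0; first by apply: A_conj => //; apply: A_pos.
  have -> : z * y * z * (z * y * z) = z * w * z by rewrite /w !mulrA.
  by rewrite (rx _ Aw xw0) mulr0 mul0r.
have [_ yz0] := sa_aba0 HA Az py zyz0.
exact: ry.
Qed.

Lemma lregA_mul_sym a t : lregA a -> GRing.comm a t -> t * t = 1 -> lregA (a * t).
Proof.
move=> ra a_t tt y Ay aty0; apply: ra => //.
have <- : t * (a * t * y) = a * y by rewrite !mulrA -a_t -(mulrA a t t) tt mulr1.
by rewrite aty0 mulr0.
Qed.

Lemma carrier_lregA a : lregA a -> is_carrier A a 1.
Proof.
move=> ra; split; first by split; [exact: (sa_one HA) | rewrite mulr1].
by move=> y Ay; rewrite mul1r; split=> [/(ra _ Ay)|->]; rewrite ?mulr0.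
Qed.

Lemma lregA_carrier a e : lregA a -> is_carrier A a e -> e = 1.
Proof.
move=> ra [[Ae ee] ae]; have Ae' : A (perp e) by apply: A_sub (sa_one HA) Ae.
apply/eqP; rewrite eq_sym -subr_eq0 -/(perp e); apply/eqP/(ra _ Ae')/(ae _ Ae').
by rewrite /perp mulrBr mulr1 ee subrr.
Qed.

Lemma polar_sym_lregA a u r :
  lregA a -> is_polar_sym A pos a u -> pos r -> r * r = a * a ->
  [/\ u * u = 1, A u, bicommA A a u, a = r * u & a = u * r].
Proof.
move=> ra [t [e [[At [[e' [ce' tt]] [bt [b [[pb bb] [a_bt a_tb]]]]]] [ce ->]]]] pr rr.
rewrite (lregA_carrier ra ce) /perp subrr addr0 -(lregA_carrier ra ce').
by rewrite -(sqrt_unique pb pr) // rr.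
Qed.

Lemma mul_carrier_eq0 m e z : A m -> is_carrier A m e -> A z -> z * m = 0 -> z * e = 0.
Proof.
move=> Am [[Ae ee] me] Az zm0.
have mzzm0 : m * (z * z) * m = 0 by rewrite !mulrA -(mulrA (m * z)) zm0 mulr0.
have [mzz0 _] := sa_aba0 HA Am (sa_sq HA Az) mzzm0.
have ezz0 : e * (z * z) = 0 by apply/(me _ (A_sqr Az)).
have zez0 : z * e * z = 0.
  apply: (sqr_eq0 (A_conj Az Ae)).
  by rewrite !mulrA -(mulrA (z * e) z z) -(mulrA z e) ezz0 mulr0 !mul0r.
by have [] := sa_aba0 HA Az (pos_proj (conj Ae ee)) zez0.
Qed.

(* The carrier of p x^2 p lies below both p and g^perp, hence vanishes. *)
Lemma annihilator_compression p g x : projA A p -> projA A g ->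
  is_meet A pos p (perp g) 0 -> A x -> p * g * p * x = 0 -> p * x = 0.
Proof.
move=> [Ap pp] [Ag gg] [_ [_ [_ meet0]]] Ax pgpx0.
pose y := p * (x * x) * p.
have Ay : A y by apply: A_conj => //; apply: A_sqr.
have ygy0 : y * g * y = 0.
  have -> : y * g * y = p * x * x * (p * g * p * x) * x * p by rewrite /y !mulrA.
  by rewrite pgpx0 mulr0 !mul0r.
have [yg0 gy0] := sa_aba0 HA Ay (pos_proj (conj Ag gg)) ygy0.
have [e [Ae [ee ye]]] := sa_carrier HA Ay; have ce : is_carrier A y e by [].
have [Ap' _] := projA_perp (conj Ap pp).
have ep' : e * perp p = 0.
  by apply/ye => //; rewrite /perp mulrBr mulr1 /y mulr_idem // subrr.
have p'e : perp p * e = 0.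
  by apply: (mul_carrier_eq0 Ay ce Ap'); rewrite /perp mulrBl mul1r /y !mulrA pp subrr.
have eg0 : e * g = 0 by apply/ye.
have ge0 : g * e = 0 by apply: (mul_carrier_eq0 Ay ce Ag).
have le_ep : sle pos e p.
  apply: pos_proj; split; first exact: A_sub.
  have ep : e * p = e by move/eqP: ep'; rewrite /perp mulrBr mulr1 subr_eq0 => /eqP <-.
  have pe : p * e = e by move/eqP: p'e; rewrite /perp mulrBl mul1r subr_eq0 => /eqP <-.
  by expand_mul; rewrite pp ee ep pe; zmod.
have le_eg' : sle pos e (perp g).
  apply: pos_proj; split; first by apply: A_sub => //; apply: A_sub (sa_one HA) Ag.
  by rewrite /perp; expand_mul; rewrite gg ee eg0 ge0; zmod.
have e0 : e = 0.
  apply: (sa_posN HA (pos_proj (conj Ae ee))).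
  by move: (meet0 e (conj Ae ee) le_ep le_eg'); rewrite /sle sub0r.
have y0 : y = 0 by rewrite -[y]mulr1; apply/(ye _ (sa_one HA)); rewrite e0 mul0r.
have xpx0 : x * p * x = 0.
  apply: (sqr_eq0 (A_conj Ax Ap)).
  have -> : x * p * x * (x * p * x) = x * y * x by rewrite /y !mulrA.
  by rewrite y0 mulr0 mul0r.
by have [] := sa_aba0 HA Ax (pos_proj (conj Ap pp)) xpx0.
Qed.

Lemma lregA_compressions p g : projA A p -> projA A g ->
  is_meet A pos p (perp g) 0 -> is_meet A pos (perp p) g 0 ->
  lregA (p * g * p + perp p * perp g * perp p).
Proof.
move=> Hp Hg meet_pg' meet_p'g x Ax sx0.
have [[_ pp] [_ gg]] := (Hp, Hg).
have px0 : p * x = 0.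
  apply: (annihilator_compression Hp Hg meet_pg' Ax).
  by rewrite -[RHS](mulr0 p) -sx0; proj_ring.
have p'x0 : perp p * x = 0.
  apply: (annihilator_compression (projA_perp Hp) (projA_perp Hg)); rewrite ?perpK //.
  by rewrite -[RHS](mulr0 (perp p)) -sx0; proj_ring.
by rewrite (proj_decomp p x) px0 p'x0 addr0.
Qed.

Section GenericPosition.
Variables p q c s u v : R.
Hypotheses (Hp : projA A p) (Hq : projA A q) (Hgen : generic A pos p q).
Hypotheses (Hc : is_sqrt pos (p * q * p + perp p * perp q * perp p) c)
           (Hs : is_sqrt pos (p * perp q * p + perp p * q * perp p) s).
Hypotheses (Hu : is_polar_sym A pos (p - perp q) u) (Hv : is_polar_sym A pos (p - q) v).

Local Notation j := (u * v * p + p * v * u).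

Let pp : p * p = p := Hp.2.
Let qq : q * q = q := Hq.2.

Lemma lregA_cos2 : lregA (c * c).
Proof.
have [_ [meet_pq' [meet_p'q _]]] := Hgen.
by rewrite Hc.2; apply: lregA_compressions.
Qed.

Lemma lregA_sin2 : lregA (s * s).
Proof.
have [meet_pq [_ [_ meet_p'q']]] := Hgen.
by have := lregA_compressions Hp (projA_perp Hq); rewrite perpK Hs.2; apply.
Qed.

Lemma lregA_cos : lregA c.
Proof. exact: lregA_of_mul lregA_cos2. Qed.

Lemma lregA_sin : lregA s.
Proof. exact: lregA_of_mul lregA_sin2. Qed.

Lemma commr_cos_p : GRing.comm c p.
Proof. by apply: commr_sqrt Hc.1 Hp.1 _; rewrite Hc.2; apply/commr_sym/commr_cos2_p. Qed.

Lemma commr_cos_q : GRing.comm c q.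
Proof. by apply: commr_sqrt Hc.1 Hq.1 _; rewrite Hc.2; apply/commr_sym/commr_cos2_q. Qed.

Lemma sin2_cos2 : s * s = 1 - c * c.
Proof. by rewrite Hs.2 Hc.2 sin2E. Qed.

Lemma commr_sin d : A d -> GRing.comm (c * c) d -> GRing.comm s d.
Proof.
move=> Ad ccd; apply: commr_sqrt Hs.1 Ad _; rewrite sin2_cos2.
by apply/commr_sym/commrB; [exact: commr1 | exact: commr_sym].
Qed.

Lemma commr_sin_p : GRing.comm s p.
Proof. by apply: commr_sin Hp.1 _; rewrite Hc.2; apply/commr_sym/commr_cos2_p. Qed.

Lemma commr_sin_q : GRing.comm s q.
Proof. by apply: commr_sin Hq.1 _; rewrite Hc.2; apply/commr_sym/commr_cos2_q. Qed.

Lemma commr_sin_cos : GRing.comm s c.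
Proof. by apply: commr_sin (A_pos Hc.1) _; rewrite /GRing.comm mulrA. Qed.

Lemma polar_u : [/\ u * u = 1, A u, bicommA A (p - perp q) u,
                   p - perp q = c * u & p - perp q = u * c].
Proof.
apply: polar_sym_lregA Hu Hc.1 _; last by rewrite Hc.2 sqr_sub_perp.
by apply: (@lregA_of_mul (p - perp q)); rewrite sqr_sub_perp // -Hc.2; exact: lregA_cos2.
Qed.

Lemma polar_v : [/\ v * v = 1, A v, bicommA A (p - q) v, p - q = s * v & p - q = v * s].
Proof.
apply: polar_sym_lregA Hv Hs.1 _; last by rewrite Hs.2 sqr_sub.
by apply: (@lregA_of_mul (p - q)); rewrite sqr_sub // -Hs.2; exact: lregA_sin2.
Qed.

Lemma commr_u_sin : GRing.comm u s.
Proof.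
have [_ _ [_ bu] _ _] := polar_u; apply: bu; split; first exact: A_pos Hs.1.
apply/commr_sym/commrB; first exact: commr_sin_p.
by rewrite /perp; apply/commrB; [exact: commr1 | exact: commr_sin_q].
Qed.

Lemma commr_v_cos : GRing.comm v c.
Proof.
have [_ _ [_ bv] _ _] := polar_v; apply: bv; split; first exact: A_pos Hc.1.
by apply/commr_sym/commrB; [exact: commr_cos_p | exact: commr_cos_q].
Qed.

Lemma anticomm_uv : u * v + v * u = 0.
Proof.
have [_ Au _ a_cu _] := polar_u; have [_ Av _ b_sv _] := polar_v.
have Ab : A (p - q) by apply: A_sub; [exact: Hp.1 | exact: Hq.1].
have ub_bu : u * (p - q) + (p - q) * u = 0.
  apply: lregA_cos; first exact: A_jordan.
  apply: anticomm_factor a_cu _ _; last exact: anticomm_sub.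
  by apply: commrB; [exact: commr_cos_p | exact: commr_cos_q].
apply: lregA_sin; first exact: A_jordan.
rewrite addrC; apply: anticomm_factor b_sv (commr_sym commr_u_sin) _.
by rewrite addrC.
Qed.

Lemma conj_u_p : u * p * u = q.
Proof.
have [_ Au _ a_cu a_uc] := polar_u.
apply: (lregA_eq lregA_cos2); [exact: A_conj Au Hp.1 | exact: Hq.1 |].
by rewrite (conj_polar a_cu a_uc commr_cos_p) conj_sub_perp // sqr_sub_perp // -Hc.2.
Qed.

Lemma conj_v_p : v * p * v = perp q.
Proof.
have [_ Av _ b_sv b_vs] := polar_v.
apply: (lregA_eq lregA_sin2); [exact: A_conj Av Hp.1 | exact: (projA_perp Hq).1 |].
by rewrite (conj_polar b_sv b_vs commr_sin_p) conj_sub // sqr_sub // -Hs.2.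
Qed.

Lemma sqr_uv : u * v * (u * v) = -1.
Proof.
have [uu _ _ _ _] := polar_u; have [vv _ _ _ _] := polar_v.
have vu : v * u = - (u * v) by apply/eqP; rewrite -addr_eq0 addrC anticomm_uv.
by rewrite -mulrA (mulrA v u v) vu mulNr mulrN -mulrA vv mulr1 uu.
Qed.

Lemma mul_p_uv : p * (u * v) = u * v - u * v * p.
Proof.
have [uu _ _ _ _] := polar_u; have [vv _ _ _ _] := polar_v.
have uqu : u * q * u = p by rewrite -conj_u_p !mulrA uu mul1r -mulrA uu mulr1.
have uvp : u * v * p = perp p * (u * v).
  transitivity (u * (v * p * v) * u * (u * v)).
    by rewrite -!mulrA (mulrA u u v) uu mul1r vv mulr1.
  by rewrite conj_v_p /perp mulrBr mulrBl mulr1 uu uqu.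
by rewrite uvp /perp mulrBl mul1r opprB addrC subrK.
Qed.

Lemma uv_reflection_anticomm : u * v * (p - perp p) = - ((p - perp p) * (u * v)).
Proof. by rewrite /perp !(mulrBr, mulrBl, mulr1, mul1r) mul_p_uv; zmod. Qed.

Lemma j_reflection : j = u * v * (p - perp p).
Proof.
have vu : v * u = - (u * v) by apply/eqP; rewrite -addr_eq0 addrC anticomm_uv.
by rewrite -[p * v * u]mulrA vu mulrN mul_p_uv /perp !(mulrBr, mulr1); zmod.
Qed.

Lemma sqr_j : j * j = 1.
Proof.
rewrite j_reflection; apply: sqr_anticomm sqr_uv _ uv_reflection_anticomm.
exact: sqr_reflection.
Qed.

Lemma commr_cos_j : GRing.comm c j.
Proof.
have [_ _ _ a_cu a_uc] := polar_u.
have cu : GRing.comm c u by rewrite /GRing.comm -a_cu -a_uc.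
have cv := commr_sym commr_v_cos; have cp := commr_cos_p.
by apply: commrD; repeat apply: commrM.
Qed.

Lemma commr_sin_j : GRing.comm s j.
Proof.
have [_ _ _ b_sv b_vs] := polar_v.
have sv : GRing.comm s v by rewrite /GRing.comm -b_sv -b_vs.
have su := commr_sym commr_u_sin; have sp := commr_sin_p.
by apply: commrD; repeat apply: commrM.
Qed.

Lemma cos_sin_j : c * s * j = p * q * perp p + perp p * q * p.
Proof.
have [_ _ _ a_cu _] := polar_u; have [_ _ _ b_sv _] := polar_v.
rewrite -(sub_perp_sub_p pp qq) mulrDr; congr (_ + _).
  by rewrite a_cu b_sv !mulrA -(mulrA c s u) -commr_u_sin mulrA.
rewrite b_sv a_cu !mulrA -(mulrA c s p) commr_sin_p mulrA commr_cos_p.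
by rewrite -(mulrA p c s) -commr_sin_cos mulrA -(mulrA (p * s) c v) -commr_v_cos mulrA.
Qed.

Lemma lregA_cos_sin : lregA (c * s).
Proof. exact: lregA_mul (A_pos Hc.1) Hs.1 lregA_cos lregA_sin. Qed.

Lemma commr_cos_sin_j : GRing.comm (c * s) j.
Proof.
by apply: commr_sym; apply: commrM; apply: commr_sym; [exact: commr_cos_j | exact: commr_sin_j].
Qed.

Lemma lregA_cos_sin_j : lregA (c * s * j).
Proof. exact: lregA_mul_sym lregA_cos_sin commr_cos_sin_j sqr_j. Qed.

Lemma polar_sym_eq_j k : is_polar_sym A pos (p * q * perp p + perp p * q * p) k -> j = k.
Proof.
rewrite -cos_sin_j => Hk.
have pcs : pos (c * s) by apply: pos_mul_comm Hc.1 Hs.1 (commr_sym commr_sin_cos).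
have sqr_cs : c * s * (c * s) = c * s * j * (c * s * j).
  rewrite -[RHS]expr2 exprMn_comm; last exact: commr_cos_sin_j.
  by rewrite !expr2 sqr_j mulr1.
have [_ Ak _ csj_csk _] := polar_sym_lregA lregA_cos_sin_j Hk pcs sqr_cs.
have [[_ Au _ _ _] [_ Av _ _ _]] := (polar_u, polar_v).
by apply: (lregA_eq lregA_cos_sin) => //; apply: A_triple Au Av Hp.1.
Qed.

End GenericPosition.

End SynapticAlgebra.

Unset Implicit Arguments.

Theorem lemma7p7 (K : realType) (R : algType K) (A pos : R -> Prop)
  (HA : synaptic A pos) (p q c s u v k : R)
  (Hp : projA A p) (Hq : projA A q) (Hgen : generic A pos p q)
  (Hc : is_sqrt pos (p * q * p + perp p * perp q * perp p) c)
  (Hs : is_sqrt pos (p * perp q * p + perp p * q * perp p) s)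
  (Hu : is_polar_sym A pos (p - perp q) u)
  (Hv : is_polar_sym A pos (p - q) v)
  (Hk : is_polar_sym A pos (p * q * perp p + perp p * q * p) k) :
  let j := u * v * p + p * v * u in
  (is_carrier A c 1 /\ is_carrier A s 1 /\ is_carrier A (c * s) 1 /\
   is_carrier A (c * s * j) 1) /\
  u * v + v * u = 0 /\ j = k.
Proof.
move=> j; split; [split; [|split; [|split]] | split].
- exact (carrier_lregA HA (lregA_cos HA Hp Hq Hgen Hc)).
- exact (carrier_lregA HA (lregA_sin HA Hp Hq Hgen Hs)).
- exact (carrier_lregA HA (lregA_cos_sin HA Hp Hq Hgen Hc Hs)).
- exact (carrier_lregA HA (lregA_cos_sin_j HA Hp Hq Hgen Hc Hs Hu Hv)).
- exact (anticomm_uv HA Hp Hq Hgen Hc Hs Hu Hv).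
- exact (polar_sym_eq_j HA Hp Hq Hgen Hc Hs Hu Hv Hk).
Qed.
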